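(* For $\mu\ge1$ define $$c^*(\mu)=\int_0^\infty \ln(z)\,G_\alpha\!\left(\frac{z}{\mu}\right)g_\alpha(z)\,dz+\int_0^\infty \ln(z)\,G_\alpha(\mu z)\,g_\alpha(z)\,dz .$$ Then $c^*$ is differentiable on $[1,\infty)$ with $$\frac{d}{d\mu}c^*(\mu)=-\frac{\Gamma(2\alpha)\,\mu^{\alpha-1}}{\Gamma(\alpha)^2(1+\mu)^{2\alpha}}\ln\mu\le 0,$$ and $\inf_{\mu\ge1}c^*(\mu)=\psi(\alpha)$, $\sup_{\mu\ge1}c^*(\mu)=c^*(1)=2\int_0^\infty\ln(z)G_\alpha(z)g_\alpha(z)\,dz$.
   Context: $\alpha>0$ is fixed. $G_\alpha$ and $g_\alpha$ denote the distribution function and density of the gamma distribution with shape $\alpha$ and scale $1$. $\psi=\Gamma'/\Gamma$ is the digamma function. *)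

From Stdlib Require Import Reals.
From Coquelicot Require Import Coquelicot.
Open Scope R_scope.

Definition Gamma (a : R) : R :=
  RInt_gen (fun t => Rpower t (a - 1) * exp (- t)) (at_right 0) (Rbar_locally p_infty).

Definition digamma (a : R) : R := Derive Gamma a / Gamma a.

Definition gamma_pdf (a z : R) : R :=
  if Rlt_dec 0 z then Rpower z (a - 1) * exp (- z) / Gamma a else 0.

Definition gamma_cdf (a x : R) : R :=
  if Rlt_dec 0 x then RInt_gen (gamma_pdf a) (at_right 0) (at_point x) else 0.

Definition cstar (a mu : R) : R :=
  RInt_gen (fun z => ln z * gamma_cdf a (z / mu) * gamma_pdf a z)
    (at_right 0) (Rbar_locally p_infty)
  + RInt_gen (fun z => ln z * gamma_cdf a (mu * z) * gamma_pdf a z)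
    (at_right 0) (Rbar_locally p_infty).

From Stdlib Require Import Reals Lra FunctionalExtensionality.
From Coquelicot Require Import Coquelicot.
Open Scope R_scope.

(* Write [cstar a mu = H (1 / mu) + H mu] with [H s = int_0^oo ln z G_a(s z) g_a(z) dz].
   Differentiating under the integral sign, [H' s = s^(a-1) / Gamma(a)^2 * int_0^oo ln z
   z^(2a-1) e^(-(1+s) z) dz], which the substitution [z -> z / (1 + s)] evaluates through
   [Gamma (2a)] and [Gamma' (2a)]; in [- H' (1 / mu) / mu^2 + H' mu] the [Gamma' (2a)] terms
   cancel, leaving the stated derivative, which is [<= 0] for [mu >= 1]. So [cstar] decreases
   on [1, +oo): its supremum is [cstar 1] and its infimum is its limit at [+oo]. That limit is
   [psi a = Gamma' a / Gamma a = int_0^oo ln z g_a(z) dz], because [G_a y <= y^a / (a Gamma a)]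
   makes [H s = O (s^a)] as [s -> 0], and [1 - G_a y = O (y^(-a/2))] makes
   [H s -> int_0^oo ln z g_a(z) dz] as [s -> oo].
   Improper integrals are limits of [RInt f a b]; they exist by monotonicity for nonnegative
   integrands and by comparison with [z^p e^(-c z)] otherwise. *)

Lemma ball_R (x e y : R) : ball x e y = (Rabs (y - x) < e).
Proof. reflexivity. Qed.

Lemma filterlim_le_R {T} {F : (T -> Prop) -> Prop} {FF : ProperFilter' F} (f g : T -> R) lf lg :
  F (fun x => f x <= g x) -> filterlim f F (locally lf) -> filterlim g F (locally lg) -> lf <= lg.
Proof. exact (filterlim_le f g lf lg). Qed.

(** * Improper integrals *)

Definition continuous_pos (f : R -> R) := forall x, 0 < x -> continuous f x.

Lemma ex_RInt_continuous_pos f a b : continuous_pos f -> 0 < a -> 0 < b -> ex_RInt f a b.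
Proof.
  intros Hf Ha Hb. apply (ex_RInt_continuous (V:=R_CompleteNormedModule)).
  intros z Hz. apply Hf. assert (0 < Rmin a b) by (apply Rmin_glb_lt; auto). lra.
Qed.

Lemma RInt_nonneg_le_wider f a' a b b' : continuous_pos f -> (forall x, 0 < x -> 0 <= f x) ->
  0 < a' <= a -> a <= b <= b' -> RInt f a b <= RInt f a' b'.
Proof.
  intros Hf Hpos Ha Hb.
  assert (Hex : forall u v, a' <= u -> a' <= v -> ex_RInt f u v)
    by (intros; apply ex_RInt_continuous_pos; auto; lra).
  rewrite <- (RInt_Chasles f a' a b') by (apply Hex; lra).
  rewrite <- (RInt_Chasles f a b b') by (apply Hex; lra).
  assert (0 <= RInt f a' a) by (apply RInt_ge_0; [lra | apply Hex; lra | intros; apply Hpos; lra]).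
  assert (0 <= RInt f b b') by (apply RInt_ge_0; [lra | apply Hex; lra | intros; apply Hpos; lra]).
  simpl; unfold plus; simpl; lra.
Qed.

Lemma RInt_plus_R f g a b : ex_RInt f a b -> ex_RInt g a b ->
  RInt (fun x => f x + g x) a b = RInt f a b + RInt g a b.
Proof. intros Hf Hg. exact (RInt_plus (V:=R_CompleteNormedModule) f g a b Hf Hg). Qed.

Lemma RInt_scal_R (c : R) f a b : ex_RInt f a b -> RInt (fun x => c * f x) a b = c * RInt f a b.
Proof. intros Hf. exact (RInt_scal (V:=R_CompleteNormedModule) f a b c Hf). Qed.

(* [Sa] and [Sb] are endpoint ranges reached eventually along [Fa] and [Fb]; on them the
   truncated integrals [RInt f a b] of a nonnegative [f] increase towards the improper
   integral as [a] decreases and [b] increases. *)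
Definition exhausted_by (Fa Fb : (R -> Prop) -> Prop) (Sa Sb : R -> Prop) : Prop :=
  (forall a0, Sa a0 -> Fa (fun a => Sa a /\ a <= a0)) /\
  (forall b0, Sb b0 -> Fb (fun b => Sb b /\ b0 <= b)) /\
  (exists a0 b0, Sa a0 /\ Sb b0) /\
  (forall a b, Sa a -> Sb b -> 0 < a <= b).

Section ExhaustedImproperIntegral.

Context {Fa Fb : (R -> Prop) -> Prop} {FFa : ProperFilter Fa} {FFb : ProperFilter Fb}.
Variables Sa Sb : R -> Prop.
Hypothesis HS : exhausted_by Fa Fb Sa Sb.

Lemma exhausted_by_eventually :
  filter_prod Fa Fb (fun ab => Sa (fst ab) /\ Sb (snd ab)).
Proof.
  destruct HS as [Ha [Hb [[a0 [b0 [Ha0 Hb0]]] _]]].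
  apply Filter_prod with (Q := Sa) (R := Sb); auto.
  - generalize (Ha a0 Ha0). apply filter_imp. tauto.
  - generalize (Hb b0 Hb0). apply filter_imp. tauto.
Qed.

Lemma filterlim_RInt_is_RInt_gen (f : R -> R) (l : R) : is_RInt_gen f Fa Fb l ->
  filterlim (fun ab => RInt f (fst ab) (snd ab)) (filter_prod Fa Fb) (locally l).
Proof.
  intros Hl P HP. unfold filtermap.
  generalize (filter_and _ _ exhausted_by_eventually (Hl P HP)). apply filter_imp.
  intros [a b] [_ [y [Hy Py]]]. simpl in Hy |- *.
  rewrite (is_RInt_unique _ _ _ _ Hy). exact Py.
Qed.

Lemma is_RInt_gen_filterlim_RInt f l : continuous_pos f ->
  filterlim (fun ab => RInt f (fst ab) (snd ab)) (filter_prod Fa Fb) (locally l) ->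
  is_RInt_gen f Fa Fb l.
Proof.
  intros Hf Hl P HP. specialize (Hl P HP). unfold filtermap in Hl. unfold filtermapi.
  generalize (filter_and _ _ exhausted_by_eventually Hl). apply filter_imp.
  intros [a b] [[Ha Hb] Pab]. exists (RInt f a b). split; [|exact Pab].
  destruct HS as [_ [_ [_ Hpos]]]. specialize (Hpos a b Ha Hb).
  apply (RInt_correct (V:=R_CompleteNormedModule)), ex_RInt_continuous_pos; auto; lra.
Qed.

Lemma ex_RInt_gen_nonneg_bounded f M : continuous_pos f -> (forall x, 0 < x -> 0 <= f x) ->
  (forall a b, Sa a -> Sb b -> RInt f a b <= M) -> ex_RInt_gen f Fa Fb.
Proof.
  intros Hf Hpos HM.
  destruct HS as [Hshrink [Hgrow [[a1 [b1 [Ha1 Hb1]]] HSpos]]].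
  set (E := fun v => exists a b, Sa a /\ Sb b /\ v = RInt f a b).
  assert (HE : bound E) by (exists M; intros v [a [b [Ha [Hb ->]]]]; auto).
  destruct (completeness E HE) as [l [Hub Hlub]]; [exists (RInt f a1 b1), a1, b1; auto|].
  exists l. apply is_RInt_gen_filterlim_RInt; auto.
  apply filterlim_locally. intros eps.
  assert (Hex : exists a0 b0, Sa a0 /\ Sb b0 /\ l - eps < RInt f a0 b0).
  { apply Classical_Prop.NNPP. intros Hn.
    assert (l <= l - eps); [|destruct eps; simpl in *; lra].
    apply Hlub. intros v [a [b [Ha [Hb ->]]]]. apply Rnot_lt_le. intros Hc. apply Hn. eauto. }
  destruct Hex as [a0 [b0 [Ha0 [Hb0 Hl0]]]].
  apply Filter_prod with (Q := fun a => Sa a /\ a <= a0) (R := fun b => Sb b /\ b0 <= b); auto.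
  intros a b [Ha Haa0] [Hb Hbb0]. rewrite ball_R. simpl.
  assert (RInt f a0 b0 <= RInt f a b).
  { pose proof (HSpos a b Ha Hb). pose proof (HSpos a0 b0 Ha0 Hb0).
    apply RInt_nonneg_le_wider; auto; lra. }
  assert (RInt f a b <= l) by (apply Hub; exists a, b; auto).
  rewrite Rabs_left1; lra.
Qed.

Lemma RInt_le_is_RInt_gen f l : continuous_pos f -> (forall x, 0 < x -> 0 <= f x) ->
  is_RInt_gen f Fa Fb l -> forall a b, Sa a -> Sb b -> RInt f a b <= l.
Proof.
  intros Hf Hpos Hl a b Ha Hb.
  destruct HS as [Hshrink [Hgrow [_ HSpos]]].
  apply (filterlim_le_R (F := filter_prod Fa Fb) (fun _ => RInt f a b)
           (fun ab => RInt f (fst ab) (snd ab))); [| apply filterlim_const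
                                                 | apply filterlim_RInt_is_RInt_gen; auto].
  apply Filter_prod with (Q := fun a' => Sa a' /\ a' <= a) (R := fun b' => Sb b' /\ b <= b'); auto.
  intros a' b' [Ha' Ha'a] [Hb' Hbb']. simpl.
  pose proof (HSpos a b Ha Hb). pose proof (HSpos a' b' Ha' Hb').
  apply RInt_nonneg_le_wider; auto; lra.
Qed.

Lemma is_RInt_gen_le_bound (f : R -> R) (M l : R) :
  (forall a b, Sa a -> Sb b -> RInt f a b <= M) -> is_RInt_gen f Fa Fb l -> l <= M.
Proof.
  intros HM Hl.
  apply (filterlim_le_R (F := filter_prod Fa Fb) (fun ab => RInt f (fst ab) (snd ab)) (fun _ => M));
    [| apply filterlim_RInt_is_RInt_gen; auto | apply filterlim_const].
  generalize exhausted_by_eventually. apply filter_imp.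
  intros [a b] [Ha Hb]. apply HM; auto.
Qed.

Lemma ex_RInt_gen_abs_le f g lg : continuous_pos f -> continuous_pos g ->
  (forall x, 0 < x -> Rabs (f x) <= g x) -> is_RInt_gen g Fa Fb lg -> ex_RInt_gen f Fa Fb.
Proof.
  intros Hf Hg Hfg Hlg.
  assert (Hfg' : forall x, 0 < x -> - g x <= f x <= g x) by (intros; apply Rabs_le_between; auto).
  assert (Hcont : continuous_pos (fun x => f x + g x))
    by (intros x Hx; apply (continuous_plus f g); auto).
  destruct (ex_RInt_gen_nonneg_bounded (fun x => f x + g x) (2 * lg)) as [lh Hlh]; auto.
  - intros x Hx. specialize (Hfg' x Hx). lra.
  - intros a b Ha Hb.
    destruct HS as [_ [_ [_ HSpos]]]. specialize (HSpos a b Ha Hb).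
    assert (Hex : forall h, continuous_pos h -> ex_RInt h a b)
      by (intros; apply ex_RInt_continuous_pos; auto; lra).
    assert (RInt f a b <= RInt g a b)
      by (apply RInt_le; auto; try lra; intros x Hx; specialize (Hfg' x ltac:(lra)); lra).
    assert (RInt g a b <= lg).
    { apply (RInt_le_is_RInt_gen g); auto.
      intros x Hx. specialize (Hfg' x Hx). lra. }
    rewrite RInt_plus_R by auto. lra.
  - exists (minus lh lg).
    assert (Hf_eq : (fun y => minus (f y + g y) (g y)) = f).
    { apply functional_extensionality. intros y. unfold minus, plus, opp; simpl. ring. }
    rewrite <- Hf_eq. exact (is_RInt_gen_minus _ _ _ _ Hlh Hlg).
Qed.

End ExhaustedImproperIntegral.

Lemma exhausted_pos :
  exhausted_by (at_right 0) (Rbar_locally p_infty) (fun a => 0 < a < 1) (fun b => 1 <= b).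
Proof.
  split; [|split; [|split]].
  - intros a0 Ha0. exists (mkposreal a0 (proj1 Ha0)). intros a Ha Ha_pos.
    rewrite ball_R in Ha. simpl in Ha. rewrite Rminus_0_r, Rabs_pos_eq in Ha; lra.
  - intros b0 Hb0. exists b0. intros b Hb. lra.
  - exists (1 / 2), 1. lra.
  - intros a b Ha Hb. lra.
Qed.

Lemma exhausted_to_point y : 0 < y ->
  exhausted_by (at_right 0) (at_point y) (fun a => 0 < a < y) (fun b => b = y).
Proof.
  intros Hy. split; [|split; [|split]].
  - intros a0 Ha0. exists (mkposreal a0 (proj1 Ha0)). intros a Ha Ha_pos.
    rewrite ball_R in Ha. simpl in Ha. rewrite Rminus_0_r, Rabs_pos_eq in Ha; lra.
  - intros b0 Hb0. unfold at_point. lra.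
  - exists (y / 2), y. lra.
  - intros a b Ha Hb. lra.
Qed.

Lemma exhausted_from_point y : 0 < y ->
  exhausted_by (at_point y) (Rbar_locally p_infty) (fun a => a = y) (fun b => y <= b).
Proof.
  intros Hy. split; [|split; [|split]].
  - intros a0 Ha0. unfold at_point. lra.
  - intros b0 Hb0. exists b0. intros b Hb. lra.
  - exists y, y. lra.
  - intros a b Ha Hb. lra.
Qed.

Notation is_RInt_pos f l := (is_RInt_gen f (at_right 0) (Rbar_locally p_infty) l).
Notation RInt_pos f := (RInt_gen f (at_right 0) (Rbar_locally p_infty)).

Definition integrable_pos (f : R -> R) :=
  continuous_pos f /\ ex_RInt_gen f (at_right 0) (Rbar_locally p_infty).

Lemma is_RInt_pos_RInt_pos f : integrable_pos f -> is_RInt_pos f (RInt_pos f).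
Proof. intros [_ Hf]. exact (RInt_gen_correct f Hf). Qed.

Lemma integrable_pos_plus f g :
  integrable_pos f -> integrable_pos g -> integrable_pos (fun x => f x + g x).
Proof.
  intros [Hf [lf Hlf]] [Hg [lg Hlg]]. split.
  - intros x Hx. apply (continuous_plus f g); auto.
  - exists (plus lf lg). exact (is_RInt_gen_plus _ _ _ _ Hlf Hlg).
Qed.

Lemma integrable_pos_scal c f : integrable_pos f -> integrable_pos (fun x => c * f x).
Proof.
  intros [Hf [lf Hlf]]. split.
  - intros x Hx. apply (continuous_mult (fun _ => c) f); auto. apply continuous_const.
  - exists (scal c lf). exact (is_RInt_gen_scal _ c _ Hlf).
Qed.

Lemma integrable_pos_abs_le f g : integrable_pos g -> continuous_pos f ->
  (forall x, 0 < x -> Rabs (f x) <= g x) -> integrable_pos f.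
Proof.
  intros Hg Hf Hfg. split; auto.
  apply (ex_RInt_gen_abs_le _ _ exhausted_pos f g (RInt_pos g)); auto.
  - apply Hg.
  - apply is_RInt_pos_RInt_pos; auto.
Qed.

Lemma RInt_le_is_RInt_pos f l : continuous_pos f -> (forall x, 0 < x -> 0 <= f x) ->
  is_RInt_pos f l -> forall a b, 0 < a <= b -> RInt f a b <= l.
Proof.
  intros Hf Hpos Hl a b Hab.
  apply Rle_trans with (RInt f (Rmin a (1 / 2)) (Rmax b 1)).
  - apply RInt_nonneg_le_wider; auto.
    + split; [apply Rmin_glb_lt; lra | apply Rmin_l].
    + split; [lra | apply Rmax_l].
  - apply (RInt_le_is_RInt_gen _ _ exhausted_pos); auto.
    + assert (Rmin a (1 / 2) <= 1 / 2) by apply Rmin_r.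
      split; [apply Rmin_glb_lt|]; lra.
    + apply Rmax_r.
Qed.

Lemma filter_prod_pos :
  filter_prod (at_right 0) (Rbar_locally p_infty) (fun ab => 0 < fst ab <= snd ab).
Proof.
  generalize (exhausted_by_eventually _ _ exhausted_pos). apply filter_imp.
  intros [a b]; simpl. lra.
Qed.

Lemma is_RInt_pos_ext (f g : R -> R) (l : R) :
  (forall x, 0 < x -> f x = g x) -> is_RInt_pos f l -> is_RInt_pos g l.
Proof.
  intros Hfg. apply is_RInt_gen_ext.
  generalize filter_prod_pos. apply filter_imp.
  intros [a b] Hab x Hx. simpl in *. rewrite Rmin_left in Hx by lra. apply Hfg. lra.
Qed.

Lemma is_RInt_pos_minus (f g : R -> R) (lf lg : R) :
  is_RInt_pos f lf -> is_RInt_pos g lg -> is_RInt_pos (fun x => f x - g x) (lf - lg).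
Proof. exact (is_RInt_gen_minus f g lf lg). Qed.

Lemma is_RInt_pos_scal (c : R) (f : R -> R) (l : R) :
  is_RInt_pos f l -> is_RInt_pos (fun x => c * f x) (c * l).
Proof. exact (is_RInt_gen_scal f c l). Qed.

Lemma is_RInt_pos_abs_le (f g : R -> R) (lf lg : R) : (forall x, 0 < x -> Rabs (f x) <= g x) ->
  is_RInt_pos f lf -> is_RInt_pos g lg -> Rabs lf <= lg.
Proof.
  intros Hfg. apply (RInt_gen_norm (V:=R_CompleteNormedModule)).
  - generalize filter_prod_pos. apply filter_imp. intros ab H; apply H.
  - generalize filter_prod_pos. apply filter_imp. intros ab H x Hx. apply Hfg. lra.
Qed.

Lemma is_RInt_pos_le (f g : R -> R) (lf lg : R) : (forall x, 0 < x -> f x <= g x) ->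
  is_RInt_pos f lf -> is_RInt_pos g lg -> lf <= lg.
Proof.
  intros Hfg Hf Hg.
  assert (Rabs (0 * lf) <= lg - lf); [|rewrite Rmult_0_l, Rabs_R0 in H; lra].
  apply (is_RInt_pos_abs_le (fun x => 0 * f x) (fun x => g x - f x)).
  - intros x Hx. rewrite Rmult_0_l, Rabs_R0. specialize (Hfg x Hx). lra.
  - apply is_RInt_pos_scal; auto.
  - apply is_RInt_pos_minus; auto.
Qed.

Lemma is_RInt_pos_comp_scale (f : R -> R) (l c : R) : 0 < c ->
  is_RInt_pos f l -> is_RInt_pos (fun z => f (c * z)) (l / c).
Proof.
  intros Hc Hf P [eps HP].
  assert (Hec : 0 < eps * c) by (apply Rmult_lt_0_compat; [apply cond_pos | auto]).
  assert (HP' : locally l (fun y => P (y / c))).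
  { exists (mkposreal _ Hec). intros y Hy. apply HP.
    rewrite ball_R in Hy |- *. simpl in Hy.
    replace (y / c - l / c) with ((y - l) / c) by (field; lra).
    unfold Rdiv. rewrite Rabs_mult, Rabs_inv, (Rabs_pos_eq c) by lra.
    apply Rmult_lt_reg_r with c; auto. field_simplify; lra. }
  destruct (Hf _ HP') as [Q R' [d Hd] [M HM] H].
  assert (Hdc : 0 < d / c) by (apply Rdiv_lt_0_compat; [apply cond_pos | auto]).
  apply Filter_prod with (Q := fun a => 0 < a < d / c) (R := fun b => M / c < b).
  - exists (mkposreal _ Hdc). intros a Ha Ha0. rewrite ball_R in Ha. simpl in Ha.
    rewrite Rminus_0_r, Rabs_pos_eq in Ha; lra.
  - exists (M / c). auto.
  - intros a b [Ha Had] Hb. simpl.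
    assert (HQa : Q (c * a)).
    { apply Hd; [|nra]. rewrite ball_R, Rminus_0_r, Rabs_pos_eq by nra.
      apply Rmult_lt_reg_r with (/ c); [apply Rinv_0_lt_compat; auto|].
      replace (c * a * / c) with a by (field; lra). exact Had. }
    assert (HRb : R' (c * b)).
    { apply HM. apply Rmult_lt_reg_r with (/ c); [apply Rinv_0_lt_compat; auto|].
      replace (c * b * / c) with b by (field; lra). exact Hb. }
    destruct (H _ _ HQa HRb) as [y [Hy Py]]. simpl in Hy.
    exists (y / c). split; auto.
    rewrite <- (Rplus_0_r (c * a)), <- (Rplus_0_r (c * b)) in Hy.
    apply (is_RInt_comp_lin f c 0 a b y), (is_RInt_scal _ a b (/ c)) in Hy.
    apply (is_RInt_ext (V:=R_NormedModule)) with (g := fun z => f (c * z)) in Hy.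
    + unfold scal in Hy; simpl in Hy; unfold mult in Hy; simpl in Hy.
      replace (y / c) with (/ c * y) by (unfold Rdiv; ring). exact Hy.
    + intros x _. unfold scal; simpl; unfold mult; simpl. rewrite Rplus_0_r. field. lra.
Qed.

Lemma continuous_of_is_derive (f : R -> R) x l : is_derive f x l -> continuous f x.
Proof.
  intros H. exact (ex_derive_continuous (K:=R_AbsRing) (V:=R_NormedModule) f x (ex_intro _ l H)).
Qed.

Lemma MVT_abs_le (f df : R -> R) (x0 x M : R) :
  (forall y, Rmin x0 x <= y <= Rmax x0 x -> is_derive f y (df y) /\ Rabs (df y) <= M) ->
  Rabs (f x - f x0) <= M * Rabs (x - x0).
Proof.
  intros Hd.
  destruct (MVT_gen f x0 x df) as [c [Hc ->]].
  - intros y Hy. apply Hd. lra.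
  - intros y Hy. apply continuity_pt_filterlim, (continuous_of_is_derive _ _ (df y)), Hd; auto.
  - rewrite Rabs_mult. apply Rmult_le_compat_r; [apply Rabs_pos | apply Hd; auto].
Qed.

Lemma Rabs_sub_le_segment x0 x y : Rmin x0 x <= y <= Rmax x0 x -> Rabs (y - x0) <= Rabs (x - x0).
Proof.
  intros [H1 H2]. unfold Rmin, Rmax in *. destruct (Rle_dec x0 x);
  unfold Rabs; repeat destruct Rcase_abs; lra.
Qed.

Lemma first_order_remainder_le (phi psi chi : R -> R) (x0 x K : R) :
  (forall y, Rmin x0 x <= y <= Rmax x0 x ->
     is_derive phi y (psi y) /\ is_derive psi y (chi y) /\ Rabs (chi y) <= K) ->
  Rabs (phi x - phi x0 - (x - x0) * psi x0) <= K * (x - x0) ^ 2.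
Proof.
  intros Hd.
  assert (Hpsi : forall y, Rmin x0 x <= y <= Rmax x0 x ->
             Rabs (psi y - psi x0) <= K * Rabs (x - x0)).
  { intros y Hy. pose proof (Rabs_sub_le_segment x0 x y Hy).
    assert (HK : 0 <= K) by (apply Rle_trans with (Rabs (chi y)); [apply Rabs_pos | apply Hd; auto]).
    apply Rle_trans with (K * Rabs (y - x0)); [|apply Rmult_le_compat_l; auto].
    apply (MVT_abs_le psi chi). intros t Ht. apply Hd.
    unfold Rmin, Rmax in *. destruct (Rle_dec x0 y), (Rle_dec x0 x); lra. }
  replace (phi x - phi x0 - (x - x0) * psi x0) with
    ((fun y => phi y - y * psi x0) x - (fun y => phi y - y * psi x0) x0) by ring.
  apply Rle_trans with (K * Rabs (x - x0) * Rabs (x - x0)).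
  - apply (MVT_abs_le (fun y => phi y - y * psi x0) (fun y => psi y - psi x0)).
    intros y Hy. split; [|apply Hpsi; auto].
    apply (is_derive_minus phi (fun y => y * psi x0)); [apply Hd; auto|].
    auto_derive; [auto | ring].
  - right. rewrite Rmult_assoc, <- Rabs_mult, Rabs_pos_eq; [ring | apply Rle_0_sqr].
Qed.

Lemma difference_quotient_sub_le (phi psi chi : R -> R) (x0 h K : R) : h <> 0 ->
  (forall y, Rabs (y - x0) <= Rabs h ->
     is_derive phi y (psi y) /\ is_derive psi y (chi y) /\ Rabs (chi y) <= K) ->
  Rabs (/ h * (phi (x0 + h) - phi x0) - psi x0) <= Rabs h * K.
Proof.
  intros Hh Hd.
  assert (Hr := first_order_remainder_le phi psi chi x0 (x0 + h) K).
  replace (x0 + h - x0) with h in Hr by ring.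
  replace (/ h * (phi (x0 + h) - phi x0) - psi x0)
    with (/ h * (phi (x0 + h) - phi x0 - h * psi x0)) by (field; auto).
  rewrite Rabs_mult, Rabs_inv.
  apply Rmult_le_reg_l with (Rabs h); [apply Rabs_pos_lt; auto|].
  rewrite <- Rmult_assoc, Rinv_r, Rmult_1_l by (apply Rabs_no_R0; auto).
  eapply Rle_trans; [apply Hr|].
  - intros y Hy. apply Hd.
    pose proof (Rabs_sub_le_segment x0 (x0 + h) y Hy). replace (x0 + h - x0) with h in H by ring. lra.
  - right. rewrite <- (Rabs_pos_eq (h ^ 2)) by (apply pow2_ge_0).
    rewrite <- RPow_abs. ring.
Qed.

Lemma is_RInt_pos_nonneg (f : R -> R) (l : R) :
  (forall x, 0 < x -> 0 <= f x) -> is_RInt_pos f l -> 0 <= l.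
Proof.
  intros Hf Hl. rewrite <- (Rmult_0_l l).
  apply (is_RInt_pos_le (fun x => 0 * f x) f); auto using is_RInt_pos_scal.
  intros x Hx. rewrite Rmult_0_l. auto.
Qed.

(* Differentiation under the improper integral sign: by [difference_quotient_sub_le] the
   difference quotient of the integrand is within [|h| K] of [psi x0], uniformly in [z]. *)
Lemma is_derive_RInt_pos_param (phi psi chi : R -> R -> R) (K I : R -> R) (x0 d lpsi lK : R) :
  0 < d ->
  (forall x, Rabs (x - x0) < d -> is_RInt_pos (phi x) (I x)) ->
  is_RInt_pos (psi x0) lpsi -> is_RInt_pos K lK ->
  (forall z x, 0 < z -> Rabs (x - x0) < d ->
     is_derive (fun y => phi y z) x (psi x z) /\ is_derive (fun y => psi y z) x (chi x z) /\
     Rabs (chi x z) <= K z) ->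
  is_derive I x0 lpsi.
Proof.
  intros Hd HI Hpsi HK Hbd.
  assert (HlK : 0 <= lK).
  { apply (is_RInt_pos_nonneg K); auto. intros z Hz.
    apply Rle_trans with (Rabs (chi x0 z)); [apply Rabs_pos|].
    apply (Hbd z x0); auto. rewrite Rminus_diag, Rabs_R0; lra. }
  apply is_derive_Reals. intros eps Heps.
  assert (Hdel : 0 < Rmin d (eps / (lK + 1))) by (apply Rmin_glb_lt; auto; apply Rdiv_lt_0_compat; lra).
  exists (mkposreal _ Hdel). intros h Hh0 Hh. simpl in Hh.
  assert (Hhd : Rabs h < d) by (eapply Rlt_le_trans; [exact Hh | apply Rmin_l]).
  assert (Hhe : Rabs h < eps / (lK + 1)) by (eapply Rlt_le_trans; [exact Hh | apply Rmin_r]).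
  assert (HE : is_RInt_pos (fun z => / h * (phi (x0 + h) z - phi x0 z) - psi x0 z)
                 (/ h * (I (x0 + h) - I x0) - lpsi)).
  { apply is_RInt_pos_minus; auto. apply is_RInt_pos_scal, is_RInt_pos_minus; apply HI.
    - replace (x0 + h - x0) with h by ring; auto.
    - rewrite Rminus_diag, Rabs_R0; auto. }
  assert (HEK : forall z, 0 < z ->
            Rabs (/ h * (phi (x0 + h) z - phi x0 z) - psi x0 z) <= Rabs h * K z).
  { intros z Hz.
    apply (difference_quotient_sub_le (fun y => phi y z) (fun y => psi y z) (fun y => chi y z)); auto.
    intros y Hy. apply Hbd; auto. lra. }
  pose proof (is_RInt_pos_abs_le _ _ _ _ HEK HE (is_RInt_pos_scal (Rabs h) _ _ HK)).
  unfold Rdiv. rewrite Rmult_comm.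
  apply Rle_lt_trans with (Rabs h * lK); auto.
  apply Rle_lt_trans with (eps / (lK + 1) * lK); [apply Rmult_le_compat_r; auto; lra|].
  apply Rlt_le_trans with (eps / (lK + 1) * (lK + 1));
    [apply Rmult_lt_compat_l; [apply Rdiv_lt_0_compat|]; lra|].
  right. field. lra.
Qed.

(** * Powers and the Gamma function *)

Lemma Rpower_pos x y : 0 < Rpower x y.
Proof. apply exp_pos. Qed.

Lemma exp_le_compat x y : x <= y -> exp x <= exp y.
Proof. intros [H | ->]; [apply Rlt_le, exp_increasing; auto | lra]. Qed.

Lemma continuous_pos_Rpower p : continuous_pos (fun t => Rpower t p).
Proof. intros x Hx. eapply continuous_of_is_derive. unfold Rpower. auto_derive; [lra | reflexivity]. Qed.

Lemma Rpower_le_add_exponents t q1 q q2 : 0 < t -> q1 <= q <= q2 ->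
  Rpower t q <= Rpower t q1 + Rpower t q2.
Proof.
  intros Ht Hq. pose proof (Rpower_pos t q1). pose proof (Rpower_pos t q2).
  unfold Rpower in *. destruct (Rle_dec (ln t) 0).
  - assert (exp (q * ln t) <= exp (q1 * ln t)) by (apply exp_le_compat; nra). lra.
  - assert (exp (q * ln t) <= exp (q2 * ln t)) by (apply exp_le_compat; nra). lra.
Qed.

Lemma Rpower_le_add_bases s b1 b2 q : 0 < b1 -> b1 <= s <= b2 ->
  Rpower s q <= Rpower b1 q + Rpower b2 q.
Proof.
  intros Hb1 Hs. pose proof (Rpower_pos b1 q). pose proof (Rpower_pos b2 q).
  assert (ln b1 <= ln s) by (apply ln_le; lra). assert (ln s <= ln b2) by (apply ln_le; lra).
  unfold Rpower in *. destruct (Rle_dec 0 q).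
  - assert (exp (q * ln s) <= exp (q * ln b2)) by (apply exp_le_compat; nra). lra.
  - assert (exp (q * ln s) <= exp (q * ln b1)) by (apply exp_le_compat; nra). lra.
Qed.

(* From [exp y >= 1 + y] at [y = +-e ln t]. *)
Lemma Rabs_ln_le t e : 0 < t -> 0 < e -> Rabs (ln t) <= (Rpower t e + Rpower t (- e)) / e.
Proof.
  intros Ht He. pose proof (Rpower_pos t e). pose proof (Rpower_pos t (- e)).
  pose proof (exp_ineq1_le (e * ln t)). pose proof (exp_ineq1_le (- e * ln t)).
  unfold Rpower in *. apply Rabs_le. split.
  - apply Rmult_le_reg_l with e; auto. field_simplify; lra.
  - apply Rmult_le_reg_l with e; auto. field_simplify; lra.
Qed.

(* For [p > 0], [p ln z <= d z + p (ln (p / d) - 1)] is [ln u <= u - 1] at [u = d z / p]. *)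
Lemma Rpower_le_exp p d : 0 < d -> exists K, forall z, 1 <= z -> Rpower z p <= K * exp (d * z).
Proof.
  intros Hd. destruct (Rle_lt_dec p 0) as [Hp | Hp].
  - exists 1. intros z Hz. unfold Rpower. rewrite Rmult_1_l. apply exp_le_compat.
    assert (0 <= ln z) by (rewrite <- ln_1; apply ln_le; lra). nra.
  - exists (exp (p * (ln (p / d) - 1))). intros z Hz.
    unfold Rpower. rewrite <- exp_plus. apply exp_le_compat.
    assert (Hq : 0 < d * z / p) by (apply Rdiv_lt_0_compat; nra).
    assert (Hpd : 0 < p / d) by (apply Rdiv_lt_0_compat; lra).
    pose proof (exp_ineq1_le (ln (d * z / p))) as H1. rewrite exp_ln in H1 by auto.
    replace (ln z) with (ln (d * z / p) + ln (p / d)) by (rewrite <- ln_mult by auto; f_equal; field; lra).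
    assert (p * (d * z / p - 1) = d * z - p) by (field; lra). nra.
Qed.

Definition power_exp (p c z : R) := Rpower z p * exp (- (c * z)).

Lemma power_exp_pos p c z : 0 < power_exp p c z.
Proof. apply Rmult_lt_0_compat; [apply Rpower_pos | apply exp_pos]. Qed.

Lemma Rpower_mul_power_exp p q c t : Rpower t q * power_exp p c t = power_exp (p + q) c t.
Proof. unfold power_exp. rewrite Rpower_plus. ring. Qed.

Lemma continuous_pos_power_exp p c : continuous_pos (power_exp p c).
Proof.
  intros z Hz. eapply continuous_of_is_derive. unfold power_exp, Rpower. auto_derive; [lra | reflexivity].
Qed.

Lemma RInt_power_exp_le_0_1 p c a : -1 < p -> 0 <= c -> 0 < a <= 1 ->
  RInt (power_exp p c) a 1 <= / (p + 1).
Proof.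
  intros Hp Hc Ha.
  assert (HI : is_RInt (fun z => Rpower z p) a 1 (/ (p + 1) - Rpower a (p + 1) / (p + 1))).
  { replace (/ (p + 1)) with (Rpower 1 (p + 1) / (p + 1))
      by (unfold Rpower; rewrite ln_1, Rmult_0_r, exp_0; field; lra).
    apply (is_RInt_derive (V:=R_CompleteNormedModule) (fun z => Rpower z (p + 1) / (p + 1))).
    - intros x Hx. assert (0 < Rmin a 1) by (apply Rmin_glb_lt; lra).
      unfold Rpower. auto_derive; [lra|].
      replace ((p + 1) * ln x) with (p * ln x + ln x) by ring.
      rewrite exp_plus, exp_ln by lra. field. lra.
    - intros x Hx. assert (0 < Rmin a 1) by (apply Rmin_glb_lt; lra). apply continuous_pos_Rpower. lra. }
  apply Rle_trans with (RInt (fun z => Rpower z p) a 1).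
  - apply RInt_le; [lra | apply ex_RInt_continuous_pos; auto using continuous_pos_power_exp; lra
                   | eexists; exact HI |].
    intros x Hx. unfold power_exp. rewrite <- (Rmult_1_r (Rpower x p)) at 2.
    apply Rmult_le_compat_l; [apply Rlt_le, Rpower_pos|].
    rewrite <- exp_0. apply exp_le_compat. nra.
  - rewrite (is_RInt_unique _ _ _ _ HI). pose proof (Rpower_pos a (p + 1)).
    assert (0 < / (p + 1)) by (apply Rinv_0_lt_compat; lra). unfold Rdiv. nra.
Qed.

Lemma RInt_power_exp_bounded_1 p c : 0 < c ->
  exists M, forall b, 1 <= b -> RInt (power_exp p c) 1 b <= M.
Proof.
  intros Hc. destruct (Rpower_le_exp p (c / 2)) as [K HK]; [lra|].
  assert (HK0 : 0 <= K).
  { specialize (HK 1 (Rle_refl 1)). pose proof (Rpower_pos 1 p). pose proof (exp_pos (c / 2 * 1)). nra. }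
  exists (K * (2 / c) * exp (- (c / 2))). intros b Hb.
  assert (HI : is_RInt (fun z => K * exp (- (c / 2 * z))) 1 b
                 (- K * (2 / c) * exp (- (c / 2 * b)) - - K * (2 / c) * exp (- (c / 2 * 1)))).
  { apply (is_RInt_derive (V:=R_CompleteNormedModule) (fun z => - K * (2 / c) * exp (- (c / 2 * z)))).
    - intros x Hx. auto_derive; [auto | field; lra].
    - intros x Hx. eapply continuous_of_is_derive. auto_derive; [auto | reflexivity]. }
  apply Rle_trans with (RInt (fun z => K * exp (- (c / 2 * z))) 1 b).
  - apply RInt_le; [lra | apply ex_RInt_continuous_pos; auto using continuous_pos_power_exp; lra
                   | eexists; exact HI |].
    intros x Hx. unfold power_exp.
    apply Rle_trans with (K * exp (c / 2 * x) * exp (- (c * x))).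
    + apply Rmult_le_compat_r; [apply Rlt_le, exp_pos | apply HK; lra].
    + right. rewrite Rmult_assoc, <- exp_plus. do 2 f_equal. field.
  - rewrite (is_RInt_unique _ _ _ _ HI). pose proof (exp_pos (- (c / 2 * b))).
    assert (0 < 2 / c) by (apply Rdiv_lt_0_compat; lra).
    replace (c / 2 * 1) with (c / 2) by ring.
    assert (0 <= K * (2 / c) * exp (- (c / 2 * b))) by (apply Rmult_le_pos; [apply Rmult_le_pos|]; lra).
    lra.
Qed.

Lemma integrable_pos_power_exp p c : -1 < p -> 0 < c -> integrable_pos (power_exp p c).
Proof.
  intros Hp Hc. split; [apply continuous_pos_power_exp|].
  destruct (RInt_power_exp_bounded_1 p c Hc) as [M HM].
  apply (ex_RInt_gen_nonneg_bounded _ _ exhausted_pos _ (/ (p + 1) + M));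
    auto using continuous_pos_power_exp.
  - intros; apply Rlt_le, power_exp_pos.
  - intros a b Ha Hb.
    rewrite <- (RInt_Chasles _ a 1 b)
      by (apply ex_RInt_continuous_pos; auto using continuous_pos_power_exp; lra).
    pose proof (RInt_power_exp_le_0_1 p c a Hp ltac:(lra) ltac:(lra)).
    pose proof (HM b Hb). simpl. unfold plus; simpl. lra.
Qed.

Lemma Gamma_integrand_eq a : (fun t => Rpower t (a - 1) * exp (- t)) = power_exp (a - 1) 1.
Proof. apply functional_extensionality. intros t. unfold power_exp. rewrite Rmult_1_l. reflexivity. Qed.

Lemma is_RInt_Gamma a : 0 < a -> is_RInt_pos (power_exp (a - 1) 1) (Gamma a).
Proof.
  intros Ha. unfold Gamma. rewrite Gamma_integrand_eq.
  apply is_RInt_pos_RInt_pos, integrable_pos_power_exp; lra.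
Qed.

Lemma Gamma_pos a : 0 < a -> 0 < Gamma a.
Proof.
  intros Ha. apply Rlt_le_trans with (RInt (power_exp (a - 1) 1) 1 2).
  - apply RInt_gt_0; [lra | intros; apply power_exp_pos |].
    intros x Hx. apply continuous_pos_power_exp. lra.
  - apply (RInt_le_is_RInt_pos _ _ (continuous_pos_power_exp _ _)); auto using is_RInt_Gamma; [|lra].
    intros; apply Rlt_le, power_exp_pos.
Qed.

Lemma integrable_pos_ln_power_exp p c : -1 < p -> 0 < c ->
  integrable_pos (fun t => ln t * power_exp p c t).
Proof.
  intros Hp Hc. set (e := (p + 1) / 2). assert (He : 0 < e) by (unfold e; lra).
  apply (integrable_pos_abs_le _ (fun t => / e * (power_exp (p + e) c t + power_exp (p + - e) c t))).
  - apply integrable_pos_scal, integrable_pos_plus; apply integrable_pos_power_exp; unfold e; lra.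
  - intros x Hx. apply (continuous_mult ln (power_exp p c)).
    + apply continuous_ln; auto.
    + apply continuous_pos_power_exp; auto.
  - intros t Ht. pose proof (power_exp_pos p c t).
    rewrite Rabs_mult, (Rabs_pos_eq (power_exp p c t)), <- !Rpower_mul_power_exp by lra.
    apply Rle_trans with ((Rpower t e + Rpower t (- e)) / e * power_exp p c t).
    + apply Rmult_le_compat_r; [lra | apply Rabs_ln_le; auto].
    + right. unfold Rdiv. ring.
Qed.

Definition dGamma (a : R) := RInt_pos (fun t => ln t * power_exp (a - 1) 1 t).

Lemma is_RInt_dGamma a : 0 < a -> is_RInt_pos (fun t => ln t * power_exp (a - 1) 1 t) (dGamma a).
Proof. intros Ha. apply is_RInt_pos_RInt_pos, integrable_pos_ln_power_exp; lra. Qed.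

Lemma ln_sq_le t e : 0 < t -> 0 < e ->
  ln t * ln t <= 2 / (e * e) * (Rpower t (2 * e) + Rpower t (- (2 * e))).
Proof.
  intros Ht He. pose proof (Rabs_ln_le t e Ht He) as Hln.
  pose proof (Rpower_pos t e). pose proof (Rpower_pos t (- e)).
  replace (Rpower t (2 * e)) with (Rpower t e * Rpower t e) by (rewrite <- Rpower_plus; f_equal; ring).
  replace (Rpower t (- (2 * e))) with (Rpower t (- e) * Rpower t (- e))
    by (rewrite <- Rpower_plus; f_equal; ring).
  set (A := Rpower t e) in *. set (B := Rpower t (- e)) in *.
  apply Rle_trans with ((A + B) / e * ((A + B) / e)).
  - rewrite <- (Rabs_pos_eq (ln t * ln t)), Rabs_mult by (apply Rle_0_sqr).
    apply Rmult_le_compat; auto using Rabs_pos.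
  - replace ((A + B) / e * ((A + B) / e)) with ((A + B) * (A + B) / (e * e)) by (field; lra).
    replace (2 / (e * e) * (A * A + B * B)) with (2 * (A * A + B * B) / (e * e)) by (field; lra).
    pose proof (Rle_0_sqr (A - B)). unfold Rsqr in *.
    apply Rmult_le_compat_r; [apply Rlt_le, Rinv_0_lt_compat; nra | nra].
Qed.

(* [K] dominates [ln t ^ 2 * t ^ (x - 1) * exp (- t)] for [|x - a| < a / 2]. *)
Lemma is_derive_Gamma a : 0 < a -> is_derive Gamma a (dGamma a).
Proof.
  intros Ha. set (e := a / 8). assert (He : 0 < e) by (unfold e; lra).
  set (K := fun t => 2 / (e * e) * (Rpower t (2 * e) + Rpower t (- (2 * e)))
                     * (power_exp (a / 2 - 1) 1 t + power_exp (3 * a / 2 - 1) 1 t)).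
  assert (HK : integrable_pos K).
  { replace K with (fun t => 2 / (e * e) *
      ((power_exp (a / 2 - 1 + 2 * e) 1 t + power_exp (3 * a / 2 - 1 + 2 * e) 1 t)
       + (power_exp (a / 2 - 1 + - (2 * e)) 1 t + power_exp (3 * a / 2 - 1 + - (2 * e)) 1 t))).
    - apply integrable_pos_scal.
      repeat apply integrable_pos_plus; apply integrable_pos_power_exp; unfold e; lra.
    - apply functional_extensionality. intros t. unfold K. rewrite <- !Rpower_mul_power_exp. ring. }
  apply (is_derive_RInt_pos_param (fun x t => power_exp (x - 1) 1 t)
           (fun x t => ln t * power_exp (x - 1) 1 t) (fun x t => ln t * (ln t * power_exp (x - 1) 1 t))
           K Gamma a (a / 2) (dGamma a) (RInt_pos K)).
  - lra.
  - intros x Hx. apply Rabs_lt_between in Hx. apply is_RInt_Gamma. lra.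
  - apply is_RInt_dGamma; auto.
  - apply is_RInt_pos_RInt_pos; auto.
  - intros z x Hz Hx. apply Rabs_lt_between in Hx.
    split; [|split]; [unfold power_exp, Rpower; auto_derive; auto; unfold Rminus; ring ..|].
    pose proof (power_exp_pos (x - 1) 1 z).
    rewrite <- Rmult_assoc, Rabs_pos_eq by (apply Rmult_le_pos; [apply Rle_0_sqr | lra]).
    apply Rmult_le_compat; [apply Rle_0_sqr | lra | apply ln_sq_le; auto |].
    unfold power_exp. rewrite <- Rmult_plus_distr_r.
    apply Rmult_le_compat_r; [apply Rlt_le, exp_pos | apply Rpower_le_add_exponents; auto; lra].
Qed.

Lemma digamma_eq a : 0 < a -> digamma a = dGamma a / Gamma a.
Proof. intros Ha. unfold digamma. rewrite (is_derive_unique _ _ _ (is_derive_Gamma a Ha)). reflexivity. Qed.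

(* Substitute [z -> c z] in [dGamma a] and [Gamma a]. *)
Lemma is_RInt_pos_ln_power_exp a c : 0 < a -> 0 < c ->
  is_RInt_pos (fun z => ln z * power_exp (a - 1) c z) (Rpower c (- a) * (dGamma a - ln c * Gamma a)).
Proof.
  intros Ha Hc.
  assert (H := is_RInt_pos_scal (Rpower c (1 - a)) _ _
                 (is_RInt_pos_minus _ _ _ _ (is_RInt_pos_comp_scale _ _ c Hc (is_RInt_dGamma a Ha))
                    (is_RInt_pos_scal (ln c) _ _ (is_RInt_pos_comp_scale _ _ c Hc (is_RInt_Gamma a Ha))))).
  replace (Rpower c (- a) * (dGamma a - ln c * Gamma a))
    with (Rpower c (1 - a) * (dGamma a / c - ln c * (Gamma a / c))).
  2:{ replace (1 - a) with (1 + - a) by ring. rewrite Rpower_plus, Rpower_1 by auto. field. lra. }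
  eapply is_RInt_pos_ext; [|exact H].
  intros z Hz. cbv beta. unfold power_exp.
  rewrite ln_mult, <- Rpower_mult_distr, Rmult_1_l by auto.
  assert (Rpower c (1 - a) * Rpower c (a - 1) = 1).
  { rewrite <- Rpower_plus. replace (1 - a + (a - 1)) with 0 by ring. apply Rpower_O; auto. }
  transitivity ((Rpower c (1 - a) * Rpower c (a - 1)) * (ln z * Rpower z (a - 1) * exp (- (c * z))));
    [ring | rewrite H0; ring].
Qed.

(** * The Gamma distribution *)

Section GammaDistribution.

Variable a : R.
Hypothesis Ha : 0 < a.

Lemma gamma_pdf_eq z : 0 < z -> gamma_pdf a z = power_exp (a - 1) 1 z / Gamma a.
Proof.
  intros Hz. unfold gamma_pdf, power_exp. destruct (Rlt_dec 0 z); [|lra]. rewrite Rmult_1_l. reflexivity.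
Qed.

Lemma gamma_pdf_nonneg z : 0 <= gamma_pdf a z.
Proof.
  unfold gamma_pdf. destruct (Rlt_dec 0 z); [|lra].
  apply Rlt_le, Rdiv_lt_0_compat; [apply Rmult_lt_0_compat; [apply Rpower_pos | apply exp_pos]|].
  apply Gamma_pos; auto.
Qed.

Lemma continuous_pos_gamma_pdf : continuous_pos (gamma_pdf a).
Proof.
  intros z Hz. apply (continuous_ext_loc _ (fun t => power_exp (a - 1) 1 t / Gamma a)).
  - exists (mkposreal z Hz). intros y Hy. rewrite ball_R in Hy. simpl in Hy.
    apply Rabs_lt_between in Hy. rewrite gamma_pdf_eq; auto. lra.
  - eapply continuous_of_is_derive. unfold power_exp, Rpower. auto_derive; [lra | reflexivity].
Qed.

Lemma is_RInt_gamma_pdf : is_RInt_pos (gamma_pdf a) 1.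
Proof.
  pose proof (Gamma_pos a Ha).
  replace 1 with (/ Gamma a * Gamma a) by (field; lra).
  apply (is_RInt_pos_ext (fun t => / Gamma a * power_exp (a - 1) 1 t)).
  - intros x Hx. rewrite gamma_pdf_eq by auto. unfold Rdiv. ring.
  - apply is_RInt_pos_scal, is_RInt_Gamma; auto.
Qed.

Lemma continuous_pos_power_gamma_pdf q : continuous_pos (fun z => Rpower z q * gamma_pdf a z).
Proof.
  intros x Hx. apply (continuous_mult (fun z => Rpower z q) (gamma_pdf a));
    [apply continuous_pos_Rpower | apply continuous_pos_gamma_pdf]; auto.
Qed.

Lemma integrable_pos_power_gamma_pdf q : - a < q ->
  integrable_pos (fun z => Rpower z q * gamma_pdf a z).
Proof.
  intros Hq. pose proof (Gamma_pos a Ha).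
  apply (integrable_pos_abs_le _ (fun z => / Gamma a * power_exp (a - 1 + q) 1 z));
    [apply integrable_pos_scal, integrable_pos_power_exp; lra | apply continuous_pos_power_gamma_pdf |].
  intros z Hz. pose proof (Rpower_pos z q). pose proof (gamma_pdf_nonneg z).
  rewrite Rabs_pos_eq by (apply Rmult_le_pos; lra).
  rewrite gamma_pdf_eq, <- Rpower_mul_power_exp by auto. right. unfold Rdiv. ring.
Qed.

Lemma integrable_pos_abs_ln_power_gamma_pdf q : - a < q ->
  integrable_pos (fun z => Rabs (ln z) * Rpower z q * gamma_pdf a z).
Proof.
  intros Hq. set (e := (q + a) / 2). assert (He : 0 < e) by (unfold e; lra).
  apply (integrable_pos_abs_le _ (fun z => / e * (Rpower z (q + e) * gamma_pdf a z
                                                  + Rpower z (q + - e) * gamma_pdf a z))).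
  - apply integrable_pos_scal, integrable_pos_plus; apply integrable_pos_power_gamma_pdf; unfold e; lra.
  - intros x Hx.
    apply (continuous_mult (fun z => Rabs (ln z) * Rpower z q) (gamma_pdf a));
      [|apply continuous_pos_gamma_pdf; auto].
    apply (continuous_mult (fun z => Rabs (ln z)) (fun z => Rpower z q));
      [|apply continuous_pos_Rpower; auto].
    apply (continuous_comp ln Rabs); [apply continuous_ln; auto | apply continuous_Rabs].
  - intros z Hz. pose proof (Rpower_pos z q). pose proof (gamma_pdf_nonneg z).
    rewrite Rabs_pos_eq by (apply Rmult_le_pos; [apply Rmult_le_pos; [apply Rabs_pos|]|]; lra).
    rewrite !Rpower_plus.
    apply Rle_trans with ((Rpower z e + Rpower z (- e)) / e * Rpower z q * gamma_pdf a z).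
    + apply Rmult_le_compat_r; auto. apply Rmult_le_compat_r; [lra|]. apply Rabs_ln_le; auto.
    + right. unfold Rdiv. ring.
Qed.

Lemma is_RInt_gen_gamma_cdf y : 0 < y ->
  is_RInt_gen (gamma_pdf a) (at_right 0) (at_point y) (gamma_cdf a y).
Proof.
  intros Hy. unfold gamma_cdf. destruct (Rlt_dec 0 y); [|lra].
  apply (RInt_gen_correct (V:=R_CompleteNormedModule) (Fa:=at_right 0) (Fb:=at_point y)).
  apply (ex_RInt_gen_nonneg_bounded _ _ (exhausted_to_point y Hy) _ 1);
    [apply continuous_pos_gamma_pdf | intros; apply gamma_pdf_nonneg |].
  intros b y' Hb ->. apply (RInt_le_is_RInt_pos _ _ continuous_pos_gamma_pdf);
    [intros; apply gamma_pdf_nonneg | apply is_RInt_gamma_pdf | lra].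
Qed.

Lemma gamma_cdf_bounds y : 0 <= gamma_cdf a y <= 1.
Proof.
  destruct (Rlt_dec 0 y) as [Hy | Hy]; [|unfold gamma_cdf; destruct (Rlt_dec 0 y); lra].
  pose proof (is_RInt_gen_gamma_cdf y Hy) as HG. split.
  - apply Rle_trans with (RInt (gamma_pdf a) (y / 2) y).
    + apply RInt_ge_0; [lra | apply ex_RInt_continuous_pos; [apply continuous_pos_gamma_pdf | lra | lra] |].
      intros; apply gamma_pdf_nonneg.
    + apply (RInt_le_is_RInt_gen _ _ (exhausted_to_point y Hy));
        auto using continuous_pos_gamma_pdf, gamma_pdf_nonneg; lra.
  - apply (is_RInt_gen_le_bound _ _ (exhausted_to_point y Hy) (gamma_pdf a) 1); auto.
    intros b y' Hb ->. apply (RInt_le_is_RInt_pos _ _ continuous_pos_gamma_pdf);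
      [intros; apply gamma_pdf_nonneg | apply is_RInt_gamma_pdf | lra].
Qed.

Lemma gamma_cdf_Chasles y : 0 < y -> gamma_cdf a y = gamma_cdf a 1 + RInt (gamma_pdf a) 1 y.
Proof.
  intros Hy.
  assert (H := is_RInt_gen_unique _ _ (is_RInt_gen_Chasles _ 1 _ _ (is_RInt_gen_gamma_cdf 1 Rlt_0_1)
      (proj2 (is_RInt_gen_at_point _ _ _ _) (RInt_correct (gamma_pdf a) 1 y
         (ex_RInt_continuous_pos _ _ _ continuous_pos_gamma_pdf Rlt_0_1 Hy))))).
  unfold gamma_cdf at 1. destruct (Rlt_dec 0 y); [exact H | lra].
Qed.

Lemma is_derive_gamma_cdf y : 0 < y -> is_derive (gamma_cdf a) y (gamma_pdf a y).
Proof.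
  intros Hy.
  apply (is_derive_ext_loc (fun t => gamma_cdf a 1 + RInt (gamma_pdf a) 1 t)).
  - exists (mkposreal y Hy). intros t Ht. rewrite ball_R in Ht. simpl in Ht.
    apply Rabs_lt_between in Ht. rewrite (gamma_cdf_Chasles t) by lra. reflexivity.
  - replace (gamma_pdf a y) with (plus zero (gamma_pdf a y)) by apply plus_zero_l.
    apply (is_derive_plus (fun _ => gamma_cdf a 1) (fun t => RInt (gamma_pdf a) 1 t));
      [apply (is_derive_const (K:=R_AbsRing) (V:=R_NormedModule))|].
    apply (is_derive_RInt (V:=R_NormedModule) (gamma_pdf a) _ 1 y).
    + exists (mkposreal y Hy). intros t Ht. rewrite ball_R in Ht. simpl in Ht.
      apply Rabs_lt_between in Ht.
      apply (RInt_correct (V:=R_CompleteNormedModule)), ex_RInt_continuous_pos;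
        [apply continuous_pos_gamma_pdf | lra | lra].
    + apply continuous_pos_gamma_pdf; auto.
Qed.
Lemma gamma_cdf_le_Rpower y : 0 < y -> gamma_cdf a y <= Rpower y a / (a * Gamma a).
Proof.
  intros Hy. pose proof (Gamma_pos a Ha).
  apply (is_RInt_gen_le_bound _ _ (exhausted_to_point y Hy) (gamma_pdf a));
    [|apply is_RInt_gen_gamma_cdf; auto].
  intros b y' Hb ->.
  assert (HI : is_RInt (fun t => Rpower t (a - 1) / Gamma a) b y
                 (Rpower y a / (a * Gamma a) - Rpower b a / (a * Gamma a))).
  { apply (is_RInt_derive (V:=R_CompleteNormedModule) (fun t => Rpower t a / (a * Gamma a))).
    - intros x Hx. rewrite Rmin_left, Rmax_right in Hx by lra.
      unfold Rpower. auto_derive; [lra|].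
      replace (a * ln x) with ((a - 1) * ln x + ln x) by ring. rewrite exp_plus, exp_ln by lra.
      field. lra.
    - intros x Hx. rewrite Rmin_left, Rmax_right in Hx by lra.
      eapply continuous_of_is_derive. unfold Rpower. auto_derive; [lra | reflexivity]. }
  apply Rle_trans with (RInt (fun t => Rpower t (a - 1) / Gamma a) b y).
  - apply RInt_le; [lra | apply ex_RInt_continuous_pos; [apply continuous_pos_gamma_pdf | lra | lra]
                   | eexists; exact HI |].
    intros x Hx. rewrite gamma_pdf_eq by lra. unfold power_exp, Rdiv.
    apply Rmult_le_compat_r; [apply Rlt_le, Rinv_0_lt_compat; auto|].
    rewrite <- (Rmult_1_r (Rpower x (a - 1))) at 2.
    apply Rmult_le_compat_l; [apply Rlt_le, Rpower_pos|].
    rewrite Rmult_1_l, <- exp_0. apply exp_le_compat. lra.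
  - rewrite (is_RInt_unique _ _ _ _ HI). pose proof (Rpower_pos b a).
    assert (0 < Rpower b a / (a * Gamma a)) by (apply Rdiv_lt_0_compat; auto; nra). lra.
Qed.

Lemma gamma_cdf_tail_le y : 0 < y ->
  1 - gamma_cdf a y <= Rpower y (- (a / 2)) * RInt_pos (fun t => Rpower t (a / 2) * gamma_pdf a t).
Proof.
  intros Hy. set (h := fun t => Rpower t (a / 2) * gamma_pdf a t).
  assert (Hh : integrable_pos h) by (apply integrable_pos_power_gamma_pdf; lra).
  assert (Hpdf_le_1 : forall u v, 0 < u <= v -> RInt (gamma_pdf a) u v <= 1)
    by (intros; apply (RInt_le_is_RInt_pos _ _ continuous_pos_gamma_pdf);
        [intros; apply gamma_pdf_nonneg | apply is_RInt_gamma_pdf | lra]).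
  destruct (ex_RInt_gen_nonneg_bounded _ _ (exhausted_from_point y Hy) (gamma_pdf a) 1) as [T HT];
    [apply continuous_pos_gamma_pdf | intros; apply gamma_pdf_nonneg | intros y' b -> Hb; auto |].
  assert (HGT : 1 = gamma_cdf a y + T).
  { transitivity (RInt_gen (gamma_pdf a) (at_right 0) (Rbar_locally p_infty)).
    - symmetry. apply is_RInt_gen_unique, is_RInt_gamma_pdf.
    - apply is_RInt_gen_unique. exact (is_RInt_gen_Chasles _ y _ _ (is_RInt_gen_gamma_cdf y Hy) HT). }
  enough (T <= Rpower y (- (a / 2)) * RInt_pos h) by lra.
  apply (is_RInt_gen_le_bound _ _ (exhausted_from_point y Hy) (gamma_pdf a)); auto.
  intros y' b -> Hb.
  assert (Hex : ex_RInt h y b) by (apply ex_RInt_continuous_pos; [apply Hh | lra | lra]).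
  apply Rle_trans with (RInt (fun t => Rpower y (- (a / 2)) * h t) y b).
  - apply RInt_le; [lra | apply ex_RInt_continuous_pos; [apply continuous_pos_gamma_pdf | lra | lra]
                   | exact (ex_RInt_scal (V:=R_CompleteNormedModule) h y b _ Hex) |].
    intros t Ht. unfold h. rewrite <- Rmult_assoc, <- (Rmult_1_l (gamma_pdf a t)) at 1.
    apply Rmult_le_compat_r; [apply gamma_pdf_nonneg|].
    unfold Rpower. rewrite <- exp_plus, <- exp_0. apply exp_le_compat.
    assert (ln y <= ln t) by (apply ln_le; lra). nra.
  - rewrite RInt_scal_R by auto. apply Rmult_le_compat_l; [apply Rlt_le, Rpower_pos|].
    apply (RInt_le_is_RInt_pos _ _ (proj1 Hh)); [|apply is_RInt_pos_RInt_pos; auto | lra].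
    intros t Ht. apply Rmult_le_pos; [apply Rlt_le, Rpower_pos | apply gamma_pdf_nonneg].
Qed.

End GammaDistribution.

(** * The function [cstar] *)

Definition cstar_part (a s : R) := RInt_pos (fun z => ln z * gamma_cdf a (s * z) * gamma_pdf a z).

Definition cstar_part_deriv (a s : R) :=
  Rpower s (a - 1) / (Gamma a * Gamma a)
  * (Rpower (1 + s) (- (2 * a)) * (dGamma (2 * a) - ln (1 + s) * Gamma (2 * a))).

Lemma cstar_split a mu : 0 < mu -> cstar a mu = cstar_part a (/ mu) + cstar_part a mu.
Proof.
  intros Hmu. unfold cstar, cstar_part. do 3 f_equal.
  apply functional_extensionality. intros z. unfold Rdiv. rewrite (Rmult_comm z). reflexivity.
Qed.

Section CstarPart.

Variable a : R.
Hypothesis Ha : 0 < a.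

Lemma continuous_pos_gamma_cdf_scale s : 0 < s -> continuous_pos (fun z => gamma_cdf a (s * z)).
Proof.
  intros Hs z Hz. eapply continuous_of_is_derive.
  apply (is_derive_comp (gamma_cdf a) (fun z => s * z)); [apply is_derive_gamma_cdf; auto; nra|].
  apply (is_derive_scal (fun z => z) z s 1), (is_derive_id (K:=R_AbsRing)).
Qed.

Lemma is_RInt_abs_ln_power_gamma_pdf q : - a < q ->
  is_RInt_pos (fun z => Rabs (ln z) * Rpower z q * gamma_pdf a z)
    (RInt_pos (fun z => Rabs (ln z) * Rpower z q * gamma_pdf a z)).
Proof. intros Hq. apply is_RInt_pos_RInt_pos, integrable_pos_abs_ln_power_gamma_pdf; auto. Qed.

Lemma is_RInt_cstar_part s : 0 < s ->
  is_RInt_pos (fun z => ln z * gamma_cdf a (s * z) * gamma_pdf a z) (cstar_part a s).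
Proof.
  intros Hs. apply is_RInt_pos_RInt_pos.
  apply (integrable_pos_abs_le _ (fun z => Rabs (ln z) * Rpower z 0 * gamma_pdf a z));
    [apply integrable_pos_abs_ln_power_gamma_pdf; lra|..].
  - intros z Hz. apply (continuous_mult (fun z => ln z * gamma_cdf a (s * z)) (gamma_pdf a));
      [|apply continuous_pos_gamma_pdf; auto].
    apply (continuous_mult ln (fun z => gamma_cdf a (s * z)));
      [apply continuous_ln; auto | apply continuous_pos_gamma_cdf_scale; auto].
  - intros z Hz. pose proof (gamma_cdf_bounds a Ha (s * z)). pose proof (gamma_pdf_nonneg a Ha z).
    rewrite Rpower_O, Rmult_1_r, !Rabs_mult, (Rabs_pos_eq (gamma_pdf a z)), (Rabs_pos_eq (gamma_cdf a _))
      by lra.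
    apply Rmult_le_compat_r; auto. rewrite <- (Rmult_1_r (Rabs (ln z))) at 2.
    apply Rmult_le_compat_l; [apply Rabs_pos | lra].
Qed.

Lemma is_RInt_ln_gamma_pdf : is_RInt_pos (fun z => ln z * gamma_pdf a z) (dGamma a / Gamma a).
Proof.
  replace (dGamma a / Gamma a) with (/ Gamma a * dGamma a) by (unfold Rdiv; ring).
  eapply is_RInt_pos_ext; [|apply is_RInt_pos_scal, is_RInt_dGamma; auto].
  intros z Hz. cbv beta. rewrite gamma_pdf_eq by auto. unfold Rdiv. ring.
Qed.

Lemma cstar_part_abs_le s : 0 < s ->
  Rabs (cstar_part a s)
  <= Rpower s a / (a * Gamma a) * RInt_pos (fun z => Rabs (ln z) * Rpower z a * gamma_pdf a z).
Proof.
  intros Hs. pose proof (Gamma_pos a Ha).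
  apply (is_RInt_pos_abs_le (fun z => ln z * gamma_cdf a (s * z) * gamma_pdf a z)
           (fun z => Rpower s a / (a * Gamma a) * (Rabs (ln z) * Rpower z a * gamma_pdf a z)));
    [| apply is_RInt_cstar_part; auto | apply is_RInt_pos_scal, is_RInt_abs_ln_power_gamma_pdf; lra].
  intros z Hz.
  pose proof (gamma_cdf_bounds a Ha (s * z)). pose proof (gamma_cdf_le_Rpower a Ha (s * z) ltac:(nra)) as Hp.
  pose proof (gamma_pdf_nonneg a Ha z). pose proof (Rabs_pos (ln z)).
  rewrite <- Rpower_mult_distr in Hp by auto.
  rewrite !Rabs_mult, (Rabs_pos_eq (gamma_cdf _ _)), (Rabs_pos_eq (gamma_pdf _ _)) by lra.
  apply Rle_trans with (Rabs (ln z) * (Rpower s a * Rpower z a / (a * Gamma a)) * gamma_pdf a z).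
  - apply Rmult_le_compat_r; auto. apply Rmult_le_compat_l; auto.
  - right. unfold Rdiv. ring.
Qed.

Lemma cstar_part_sub_abs_le s : 0 < s ->
  Rabs (cstar_part a s - dGamma a / Gamma a)
  <= Rpower s (- (a / 2)) * RInt_pos (fun t => Rpower t (a / 2) * gamma_pdf a t)
     * RInt_pos (fun z => Rabs (ln z) * Rpower z (- (a / 2)) * gamma_pdf a z).
Proof.
  intros Hs. set (M := RInt_pos (fun t => Rpower t (a / 2) * gamma_pdf a t)).
  assert (HM : 0 <= M).
  { apply (is_RInt_pos_nonneg (fun t => Rpower t (a / 2) * gamma_pdf a t)).
    - intros t Ht. apply Rmult_le_pos; [apply Rlt_le, Rpower_pos | apply gamma_pdf_nonneg; auto].
    - apply is_RInt_pos_RInt_pos, integrable_pos_power_gamma_pdf; auto; lra. }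
  apply (is_RInt_pos_abs_le (fun z => ln z * gamma_cdf a (s * z) * gamma_pdf a z - ln z * gamma_pdf a z)
           (fun z => Rpower s (- (a / 2)) * M * (Rabs (ln z) * Rpower z (- (a / 2)) * gamma_pdf a z)));
    [| apply is_RInt_pos_minus; [apply is_RInt_cstar_part | apply is_RInt_ln_gamma_pdf]; auto
     | apply is_RInt_pos_scal, is_RInt_abs_ln_power_gamma_pdf; lra].
  intros z Hz.
  pose proof (gamma_cdf_bounds a Ha (s * z)). pose proof (gamma_cdf_tail_le a Ha (s * z) ltac:(nra)) as Ht.
  pose proof (gamma_pdf_nonneg a Ha z). pose proof (Rabs_pos (ln z)).
  pose proof (Rpower_pos s (- (a / 2))). pose proof (Rpower_pos z (- (a / 2))).
  rewrite <- Rpower_mult_distr in Ht by auto. fold M in Ht.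
  replace (ln z * gamma_cdf a (s * z) * gamma_pdf a z - ln z * gamma_pdf a z)
    with (ln z * (gamma_cdf a (s * z) - 1) * gamma_pdf a z) by ring.
  rewrite !Rabs_mult, (Rabs_pos_eq (gamma_pdf _ _)), Rabs_minus_sym, (Rabs_pos_eq (1 - _)) by lra.
  apply Rle_trans with (Rabs (ln z) * (Rpower s (- (a / 2)) * Rpower z (- (a / 2)) * M) * gamma_pdf a z).
  - apply Rmult_le_compat_r; auto. apply Rmult_le_compat_l; auto.
  - right. ring.
Qed.

Lemma is_RInt_cstar_part_deriv s : 0 < s ->
  is_RInt_pos (fun z => ln z * (z * (power_exp (a - 1) 1 (s * z) / Gamma a)) * gamma_pdf a z)
    (cstar_part_deriv a s).
Proof.
  intros Hs. pose proof (Gamma_pos a Ha).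
  eapply is_RInt_pos_ext;
    [|exact (is_RInt_pos_scal (Rpower s (a - 1) / (Gamma a * Gamma a)) _ _
               (is_RInt_pos_ln_power_exp (2 * a) (1 + s) ltac:(lra) ltac:(lra)))].
  intros z Hz. cbv beta. rewrite gamma_pdf_eq by auto. unfold power_exp.
  rewrite <- Rpower_mult_distr by auto.
  replace (2 * a - 1) with (a - 1 + (a - 1) + 1) by ring. rewrite !Rpower_plus, Rpower_1 by auto.
  replace (- ((1 + s) * z)) with (- (1 * (s * z)) + - (1 * z)) by ring. rewrite exp_plus.
  field. lra.
Qed.

Lemma is_derive_cstar_part_integrand x z : 0 < x -> 0 < z ->
  is_derive (fun y => ln z * gamma_cdf a (y * z) * gamma_pdf a z) x
    (ln z * (z * (power_exp (a - 1) 1 (x * z) / Gamma a)) * gamma_pdf a z).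
Proof.
  intros Hx Hz.
  assert (HG : is_derive (fun y => gamma_cdf a (y * z)) x (z * gamma_pdf a (x * z))).
  { apply (is_derive_comp (gamma_cdf a) (fun y => y * z)); [apply is_derive_gamma_cdf; auto; nra|].
    auto_derive; auto. ring. }
  rewrite <- gamma_pdf_eq by nra.
  apply (is_derive_ext (fun y => (ln z * gamma_pdf a z) * gamma_cdf a (y * z))); [intros t; simpl; ring|].
  replace (ln z * (z * gamma_pdf a (x * z)) * gamma_pdf a z)
    with (scal (ln z * gamma_pdf a z) (z * gamma_pdf a (x * z)))
    by (unfold scal; simpl; unfold mult; simpl; ring).
  exact (is_derive_scal _ x (ln z * gamma_pdf a z) _ HG).
Qed.

Lemma is_derive_cstar_part_deriv_integrand x z : 0 < x -> 0 < z ->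
  is_derive (fun y => ln z * (z * (power_exp (a - 1) 1 (y * z) / Gamma a)) * gamma_pdf a z) x
    (ln z * (z * (z * ((a - 1) * power_exp (a - 2) 1 (x * z) - power_exp (a - 1) 1 (x * z))
                  / Gamma a)) * gamma_pdf a z).
Proof.
  intros Hx Hz. pose proof (Gamma_pos a Ha).
  unfold power_exp, Rpower. auto_derive; [nra|].
  replace ((a - 1) * ln (x * z)) with ((a - 2) * ln (x * z) + ln (x * z)) by ring.
  rewrite exp_plus, exp_ln by nra. field. lra.
Qed.

Lemma Rabs_power_exp_deriv_le u : 0 < u ->
  Rabs ((a - 1) * power_exp (a - 2) 1 u - power_exp (a - 1) 1 u)
  <= Rabs (a - 1) * Rpower u (a - 2) + Rpower u (a - 1).
Proof.
  intros Hu. pose proof (Rpower_pos u (a - 2)). pose proof (Rpower_pos u (a - 1)).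
  assert (Hpe : forall q, 0 <= power_exp q 1 u <= Rpower u q).
  { intros q. pose proof (power_exp_pos q 1 u). split; [lra|].
    unfold power_exp. rewrite <- (Rmult_1_r (Rpower u q)) at 2.
    apply Rmult_le_compat_l; [apply Rlt_le, Rpower_pos|].
    rewrite Rmult_1_l, <- exp_0. apply exp_le_compat. lra. }
  eapply Rle_trans; [apply Rabs_triang|].
  rewrite Rabs_Ropp, Rabs_mult, (Rabs_pos_eq (power_exp (a - 2) 1 u)),
    (Rabs_pos_eq (power_exp (a - 1) 1 u)) by apply Hpe.
  apply Rplus_le_compat; [apply Rmult_le_compat_l; [apply Rabs_pos|]|]; apply Hpe.
Qed.

Lemma cstar_part_second_deriv_integrand_le s0 x z : 0 < s0 -> Rabs (x - s0) < s0 / 2 -> 0 < z ->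
  Rabs (ln z * (z * (z * ((a - 1) * power_exp (a - 2) 1 (x * z) - power_exp (a - 1) 1 (x * z))
                      / Gamma a)) * gamma_pdf a z)
  <= / Gamma a * (Rabs (a - 1) * (Rpower (s0 / 2) (a - 2) + Rpower (3 * s0 / 2) (a - 2))
                    * (Rabs (ln z) * Rpower z a * gamma_pdf a z)
                  + (Rpower (s0 / 2) (a - 1) + Rpower (3 * s0 / 2) (a - 1))
                    * (Rabs (ln z) * Rpower z (a + 1) * gamma_pdf a z)).
Proof.
  intros Hs0 Hx Hz. apply Rabs_lt_between in Hx. pose proof (Gamma_pos a Ha).
  set (S1 := Rpower (s0 / 2) (a - 2) + Rpower (3 * s0 / 2) (a - 2)).
  set (S2 := Rpower (s0 / 2) (a - 1) + Rpower (3 * s0 / 2) (a - 1)).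
  assert (Hx1 : Rpower x (a - 2) <= S1) by (apply Rpower_le_add_bases; lra).
  assert (Hx2 : Rpower x (a - 1) <= S2) by (apply Rpower_le_add_bases; lra).
  assert (HD : Rabs ((a - 1) * power_exp (a - 2) 1 (x * z) - power_exp (a - 1) 1 (x * z))
               <= Rabs (a - 1) * S1 * Rpower z (a - 2) + S2 * Rpower z (a - 1)).
  { eapply Rle_trans; [apply Rabs_power_exp_deriv_le; nra|].
    rewrite <- !Rpower_mult_distr by lra.
    pose proof (Rpower_pos z (a - 2)). pose proof (Rpower_pos z (a - 1)). pose proof (Rabs_pos (a - 1)).
    apply Rplus_le_compat; [rewrite Rmult_assoc; apply Rmult_le_compat_l; auto|];
      apply Rmult_le_compat_r; lra. }
  assert (Hza : z * z * Rpower z (a - 2) = Rpower z a)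
    by (rewrite <- (Rpower_1 z) at 1 2 by auto; rewrite <- !Rpower_plus; f_equal; ring).
  assert (Hza1 : z * z * Rpower z (a - 1) = Rpower z (a + 1))
    by (rewrite <- (Rpower_1 z) at 1 2 by auto; rewrite <- !Rpower_plus; f_equal; ring).
  pose proof (gamma_pdf_nonneg a Ha z). pose proof (Rabs_pos (ln z)).
  unfold Rdiv. rewrite !Rabs_mult, Rabs_inv, (Rabs_pos_eq (gamma_pdf a z)), (Rabs_pos_eq z),
    (Rabs_pos_eq (Gamma a)) by lra.
  rewrite <- Hza, <- Hza1.
  apply Rle_trans with (Rabs (ln z) * (z * (z * (Rabs (a - 1) * S1 * Rpower z (a - 2)
                          + S2 * Rpower z (a - 1)) * / Gamma a)) * gamma_pdf a z).
  - apply Rmult_le_compat_r; auto. apply Rmult_le_compat_l; auto.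
    apply Rmult_le_compat_l; [lra|]. apply Rmult_le_compat_r; [apply Rlt_le, Rinv_0_lt_compat; lra|].
    apply Rmult_le_compat_l; lra.
  - right. ring.
Qed.

Lemma is_derive_cstar_part s0 : 0 < s0 -> is_derive (cstar_part a) s0 (cstar_part_deriv a s0).
Proof.
  intros Hs0.
  set (K := fun z => / Gamma a *
    (Rabs (a - 1) * (Rpower (s0 / 2) (a - 2) + Rpower (3 * s0 / 2) (a - 2))
       * (Rabs (ln z) * Rpower z a * gamma_pdf a z)
     + (Rpower (s0 / 2) (a - 1) + Rpower (3 * s0 / 2) (a - 1))
       * (Rabs (ln z) * Rpower z (a + 1) * gamma_pdf a z))).
  assert (HK : integrable_pos K).
  { apply integrable_pos_scal, integrable_pos_plus; apply integrable_pos_scal;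
      apply integrable_pos_abs_ln_power_gamma_pdf; lra. }
  apply (is_derive_RInt_pos_param (fun x z => ln z * gamma_cdf a (x * z) * gamma_pdf a z)
    (fun x z => ln z * (z * (power_exp (a - 1) 1 (x * z) / Gamma a)) * gamma_pdf a z)
    (fun x z => ln z * (z * (z * ((a - 1) * power_exp (a - 2) 1 (x * z) - power_exp (a - 1) 1 (x * z))
                              / Gamma a)) * gamma_pdf a z)
    K (cstar_part a) s0 (s0 / 2) _ (RInt_pos K)); [lra | | | apply is_RInt_pos_RInt_pos; auto |].
  - intros x Hx. apply Rabs_lt_between in Hx. apply is_RInt_cstar_part. lra.
  - apply is_RInt_cstar_part_deriv; auto.
  - intros z x Hz Hx. pose proof (proj1 (Rabs_lt_between _ _) Hx) as Hx'.
    split; [|split]; [apply is_derive_cstar_part_integrand | apply is_derive_cstar_part_deriv_integrand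
                     | apply cstar_part_second_deriv_integrand_le]; auto; lra.
Qed.

End CstarPart.

Definition cstar_deriv (a mu : R) :=
  - (Gamma (2 * a) * Rpower mu (a - 1) / (Gamma a ^ 2 * Rpower (1 + mu) (2 * a))) * ln mu.

(* The [dGamma (2 a)] terms of the two parts cancel and only the [ln] terms survive. *)
Lemma cstar_part_deriv_sum a mu : 0 < a -> 0 < mu ->
  - 1 / mu ^ 2 * cstar_part_deriv a (/ mu) + cstar_part_deriv a mu = cstar_deriv a mu.
Proof.
  intros Ha Hmu. pose proof (Gamma_pos a Ha).
  unfold cstar_part_deriv, cstar_deriv, Rpower.
  rewrite ln_Rinv by auto.
  replace (1 + / mu) with ((1 + mu) / mu) by (field; lra).
  rewrite ln_div by lra.
  set (m := ln mu). set (n := ln (1 + mu)).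
  assert (HX : exp ((a - 1) * - m) * exp (- (2 * a) * (n - m))
               = exp ((a - 1) * m) * exp (- (2 * a) * n) * (mu * mu)).
  { replace (mu * mu) with (exp m * exp m) by (unfold m; rewrite exp_ln; auto).
    rewrite <- !exp_plus. f_equal. ring. }
  assert (HY : exp (2 * a * n) = / exp (- (2 * a) * n)) by (rewrite <- exp_Ropp; f_equal; ring).
  rewrite HY.
  replace (exp ((a - 1) * - m) / (Gamma a * Gamma a)
             * (exp (- (2 * a) * (n - m)) * (dGamma (2 * a) - (n - m) * Gamma (2 * a))))
    with ((exp ((a - 1) * - m) * exp (- (2 * a) * (n - m))) / (Gamma a * Gamma a)
            * (dGamma (2 * a) - (n - m) * Gamma (2 * a))) by (field; lra).
  rewrite HX. pose proof (exp_pos (- (2 * a) * n)). field. lra.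
Qed.

Lemma is_derive_cstar a mu : 0 < a -> 0 < mu -> is_derive (cstar a) mu (cstar_deriv a mu).
Proof.
  intros Ha Hmu.
  apply (is_derive_ext_loc (fun y => cstar_part a (/ y) + cstar_part a y)).
  - exists (mkposreal mu Hmu). intros y Hy. rewrite ball_R in Hy. simpl in Hy.
    apply Rabs_lt_between in Hy. rewrite cstar_split by lra. reflexivity.
  - rewrite <- cstar_part_deriv_sum by auto.
    apply (is_derive_plus (fun y => cstar_part a (/ y)) (cstar_part a)); [|apply is_derive_cstar_part; auto].
    apply (is_derive_comp (cstar_part a) Rinv); [apply is_derive_cstar_part, Rinv_0_lt_compat; auto|].
    apply (is_derive_inv (fun y => y) mu 1); [apply (is_derive_id (K:=R_AbsRing)) | lra].
Qed.

Lemma cstar_deriv_nonpos a mu : 0 < a -> 1 <= mu -> cstar_deriv a mu <= 0.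
Proof.
  intros Ha Hmu. unfold cstar_deriv. pose proof (Gamma_pos a Ha). pose proof (Gamma_pos (2 * a) ltac:(lra)).
  pose proof (Rpower_pos mu (a - 1)). pose proof (Rpower_pos (1 + mu) (2 * a)).
  assert (0 <= ln mu) by (rewrite <- ln_1; apply ln_le; lra).
  assert (0 < Gamma (2 * a) * Rpower mu (a - 1) / (Gamma a ^ 2 * Rpower (1 + mu) (2 * a)))
    by (apply Rdiv_lt_0_compat; [nra | apply Rmult_lt_0_compat; [apply pow_lt|]; auto]).
  nra.
Qed.

Lemma cstar_nonincreasing a m1 m2 : 0 < a -> 1 <= m1 <= m2 -> cstar a m2 <= cstar a m1.
Proof.
  intros Ha Hm.
  destruct (MVT_gen (cstar a) m1 m2 (cstar_deriv a)) as [c [Hc Heq]].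
  - intros x Hx. rewrite Rmin_left, Rmax_right in Hx by lra. apply is_derive_cstar; lra.
  - intros x Hx. rewrite Rmin_left, Rmax_right in Hx by lra.
    apply continuity_pt_filterlim, (continuous_of_is_derive _ _ (cstar_deriv a x)), is_derive_cstar; lra.
  - rewrite Rmin_left, Rmax_right in Hc by lra.
    assert (cstar_deriv a c <= 0) by (apply cstar_deriv_nonpos; lra). nra.
Qed.

Lemma filterlim_Rpower_opp q : 0 < q ->
  filterlim (fun mu => Rpower mu (- q)) (Rbar_locally p_infty) (locally 0).
Proof.
  intros Hq. apply filterlim_locally. intros eps.
  exists (exp (- ln eps / q)). intros mu Hmu.
  assert (Hmu0 : 0 < mu) by (eapply Rlt_trans; [apply exp_pos | eauto]).
  assert (Hln : - ln eps / q < ln mu)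
    by (rewrite <- (ln_exp (- ln eps / q)); apply ln_increasing; auto; apply exp_pos).
  rewrite ball_R, Rminus_0_r, Rabs_pos_eq by (apply Rlt_le, Rpower_pos).
  unfold Rpower. rewrite <- (exp_ln eps) by apply cond_pos. apply exp_increasing.
  apply Rmult_lt_compat_l with (r := q) in Hln; auto.
  replace (q * (- ln eps / q)) with (- ln eps) in Hln by (field; lra). lra.
Qed.

Lemma filterlim_abs_sub_le {T} {F : (T -> Prop) -> Prop} {FF : Filter F} (f g : T -> R) (l : R) :
  F (fun x => Rabs (f x - l) <= g x) -> filterlim g F (locally 0) -> filterlim f F (locally l).
Proof.
  intros Hfg Hg. apply filterlim_locally. intros eps.
  generalize (filter_and _ _ Hfg (proj1 (filterlim_locally g 0) Hg eps)). apply filter_imp.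
  intros x [Hx Hgx]. rewrite ball_R in Hgx |- *. rewrite Rminus_0_r in Hgx.
  eapply Rle_lt_trans; [exact Hx|]. eapply Rle_lt_trans; [apply Rle_abs | exact Hgx].
Qed.

Lemma cstar_tends_digamma a : 0 < a ->
  filterlim (cstar a) (Rbar_locally p_infty) (locally (digamma a)).
Proof.
  intros Ha. rewrite digamma_eq by auto.
  set (I1 := RInt_pos (fun z => Rabs (ln z) * Rpower z a * gamma_pdf a z)).
  set (I2 := RInt_pos (fun z => Rabs (ln z) * Rpower z (- (a / 2)) * gamma_pdf a z)).
  set (M := RInt_pos (fun t => Rpower t (a / 2) * gamma_pdf a t)).
  apply (filterlim_abs_sub_le _
           (fun mu => Rpower mu (- a) * (I1 / (a * Gamma a)) + Rpower mu (- (a / 2)) * (M * I2))).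
  - exists 0. intros mu Hmu. rewrite cstar_split by auto.
    assert (Hs := cstar_part_abs_le a Ha (/ mu) ltac:(apply Rinv_0_lt_compat; auto)).
    assert (Hl := cstar_part_sub_abs_le a Ha mu Hmu).
    fold I1 in Hs. fold M I2 in Hl.
    replace (Rpower (/ mu) a) with (Rpower mu (- a)) in Hs
      by (unfold Rpower; rewrite ln_Rinv by auto; f_equal; ring).
    replace (cstar_part a (/ mu) + cstar_part a mu - dGamma a / Gamma a)
      with (cstar_part a (/ mu) + (cstar_part a mu - dGamma a / Gamma a)) by ring.
    eapply Rle_trans; [apply Rabs_triang|].
    assert (Rpower mu (- a) / (a * Gamma a) * I1 = Rpower mu (- a) * (I1 / (a * Gamma a)))
      by (unfold Rdiv; ring).
    assert (Rpower mu (- (a / 2)) * M * I2 = Rpower mu (- (a / 2)) * (M * I2)) by ring.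
    lra.
  - set (C1 := I1 / (a * Gamma a)). set (C2 := M * I2).
    replace 0 with (0 * C1 + 0 * C2) by ring.
    change (is_lim (fun mu => Rpower mu (- a) * C1 + Rpower mu (- (a / 2)) * C2) p_infty
              (0 * C1 + 0 * C2)).
    apply is_lim_plus';
      [exact (is_lim_scal_r _ C1 p_infty 0 (filterlim_Rpower_opp a Ha))
      | exact (is_lim_scal_r _ C2 p_infty 0 (filterlim_Rpower_opp (a / 2) ltac:(lra)))].
Qed.

Lemma nonincreasing_glb_lub (h : R -> R) (m L : R) :
  (forall x y, m <= x <= y -> h y <= h x) -> filterlim h (Rbar_locally p_infty) (locally L) ->
  is_glb_Rbar (fun v => exists x, m <= x /\ v = h x) L
  /\ is_lub_Rbar (fun v => exists x, m <= x /\ v = h x) (h m).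
Proof.
  intros Hh Hlim. split; split.
  - intros v [x [Hx ->]]. simpl.
    apply (filterlim_le_R (F := Rbar_locally p_infty) h (fun _ => h x));
      [exists x; intros y Hy; apply Hh; lra | auto | apply filterlim_const].
  - intros [r | |] Hb; simpl; auto.
    + apply (filterlim_le_R (F := Rbar_locally p_infty) (fun _ => r) h); [|apply filterlim_const | auto].
      exists m. intros y Hy. apply (Hb (h y)). exists y. split; [lra | reflexivity].
    + apply (Hb (h m)). exists m. split; [lra | reflexivity].
  - intros v [x [Hx ->]]. simpl. apply Hh. lra.
  - intros b Hb. apply (Hb (h m)). exists m. split; [lra | reflexivity].
Qed.

Lemma filterlim_within_is_derive (f : R -> R) (x l : R) (D : R -> Prop) : is_derive f x l ->
  filterlim (fun h => (f (x + h) - f x) / h) (within (fun h => h <> 0 /\ D h) (locally 0)) (locally l).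
Proof.
  intros Hd. apply is_derive_Reals in Hd.
  intros P [eps HP]. destruct (Hd eps (cond_pos eps)) as [del Hdel].
  exists del. intros h Hh [Hh0 _]. apply HP. rewrite ball_R. apply Hdel; auto.
  rewrite ball_R, Rminus_0_r in Hh. exact Hh.
Qed.

Lemma cstar_1 a : cstar a 1 = 2 * RInt_pos (fun z => ln z * gamma_cdf a z * gamma_pdf a z).
Proof.
  unfold cstar.
  replace (fun z => ln z * gamma_cdf a (z / 1) * gamma_pdf a z) with
    (fun z => ln z * gamma_cdf a z * gamma_pdf a z)
    by (apply functional_extensionality; intros z; unfold Rdiv; rewrite Rinv_1, Rmult_1_r; auto).
  replace (fun z => ln z * gamma_cdf a (1 * z) * gamma_pdf a z) with
    (fun z => ln z * gamma_cdf a z * gamma_pdf a z)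
    by (apply functional_extensionality; intros z; rewrite Rmult_1_l; auto).
  ring.
Qed.

Theorem mainTheorem4 (alpha : R) (Halpha : 0 < alpha) :
  (forall mu : R, 1 <= mu ->
     filterlim (fun h => (cstar alpha (mu + h) - cstar alpha mu) / h)
       (within (fun h => h <> 0 /\ 1 <= mu + h) (locally 0))
       (locally (- (Gamma (2 * alpha) * Rpower mu (alpha - 1)
                    / (Gamma alpha ^ 2 * Rpower (1 + mu) (2 * alpha))) * ln mu))
     /\ - (Gamma (2 * alpha) * Rpower mu (alpha - 1)
           / (Gamma alpha ^ 2 * Rpower (1 + mu) (2 * alpha))) * ln mu <= 0)
  /\ is_glb_Rbar (fun y => exists mu, 1 <= mu /\ y = cstar alpha mu)
       (Finite (digamma alpha))
  /\ is_lub_Rbar (fun y => exists mu, 1 <= mu /\ y = cstar alpha mu)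
       (Finite (cstar alpha 1))
  /\ cstar alpha 1 =
       2 * RInt_gen (fun z => ln z * gamma_cdf alpha z * gamma_pdf alpha z)
             (at_right 0) (Rbar_locally p_infty).
Proof.
  destruct (nonincreasing_glb_lub (cstar alpha) 1 (digamma alpha)) as [Hglb Hlub].
  - intros x y Hxy. apply cstar_nonincreasing; auto.
  - apply cstar_tends_digamma; auto.
  - split; [|split; [|split]]; auto.
    + intros mu Hmu. split.
      * apply filterlim_within_is_derive, is_derive_cstar; lra.
      * apply cstar_deriv_nonpos; auto.
    + apply cstar_1.
Qed.
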